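(* Every permutation $(a_1,a_2,a_3,\ldots)$ of the positive integers contains a 3-term arithmetic progression with odd common difference as a subsequence.
   Context: A permutation of the positive integers is a sequence $(a_1,a_2,\ldots)$ in which every positive integer appears exactly once. A sequence contains a $k$-term arithmetic progression with common difference $d\neq 0$ as a subsequence if there are indices $i_1<i_2<\cdots<i_k$ with $a_{i_{m+1}} - a_{i_m} = d$ for all $1\le m<k$. The difference $d$ may be positive or negative. *)

From Stdlib Require Import ZArith.
Open Scope Z_scope.

(* A permutation of the positive integers, as a sequence a : nat -> Z
   (index i corresponds to a_{i+1}): every positive integer appears exactly once,
   and every term is a positive integer. *)
Definition is_perm_pos (a : nat -> Z) : Prop :=
  (forall i, 0 < a i) /\ (forall n, 0 < n -> exists! i, a i = n).

Definition has_3AP_diff (a : nat -> Z) (d : Z) : Prop :=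
  d <> 0 /\ exists i1 i2 i3 : nat, (i1 < i2 < i3)%nat /\
    a i2 - a i1 = d /\ a i3 - a i2 = d.

(** Suppose [a] has no 3-term progression with odd difference. If [i < j] and
    [a j - a i] is odd, then the value [2 a j - a i] (when positive) must occur
    before position [j]. Let [m = a 0] and let [m + 1] sit at position [p]. For
    a large value [e ≡ m (mod 2)] occurring after [p], reflecting [m + 1] through
    [e] and then [m] through the result produces the value [4e - 3m - 2], again
    large and [≡ m (mod 2)], at an earlier position. Iterating gives an infinite
    descent of positions. *)

From Stdlib Require Import ZArith Lia Classical.
Open Scope Z_scope.

Lemma odd_neq0 (d : Z) : Z.Odd d -> d <> 0.
Proof. intros [q Hq] Hd; lia. Qed.

Lemma prefix_bounded (a : nat -> Z) (n : nat) :
  exists B, forall i, (i <= n)%nat -> a i <= B.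
Proof.
  induction n as [|n [B HB]].
  - exists (a O); intros i Hi; replace i with O by lia; lia.
  - exists (Z.max B (a (S n))); intros i Hi.
    destruct (Nat.eq_dec i (S n)) as [->|Hne]; [lia|].
    specialize (HB i ltac:(lia)); lia.
Qed.

Section NoOdd3AP.

Variable a : nat -> Z.
Hypothesis a_pos : forall i, 0 < a i.
Hypothesis a_onto : forall n, 0 < n -> exists i, a i = n.
Hypothesis no_odd_3AP : forall d, Z.Odd d -> ~ has_3AP_diff a d.

Lemma reflection_occurs_before (i j k : nat) :
  (i < j)%nat -> Z.Odd (a j - a i) -> a k = 2 * a j - a i -> (k < j)%nat.
Proof.
  intros Hij Hodd Hk.
  destruct (Nat.lt_ge_cases k j) as [|Hjk]; [assumption|exfalso].
  pose proof (odd_neq0 _ Hodd) as Hd.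
  destruct (Nat.eq_dec k j) as [->|Hne]; [lia|].
  apply (no_odd_3AP (a j - a i) Hodd).
  split; [exact Hd|].
  exists i, j, k; repeat split; lia.
Qed.

Section Descent.

Variables (p : nat) (B : Z).
Hypothesis a_p : a p = a O + 1.
Hypothesis prefix_le_B : forall i, (i <= p)%nat -> a i <= B.

Definition far_value (e : Z) : Prop :=
  Z.Even (e - a O) /\ B < e /\ 3 * a O + 2 < e.

Lemma far_value_descent (k : nat) :
  far_value (a k) -> exists k', (k' < k)%nat /\ far_value (a k').
Proof.
  intros [[q Hq] [HB Hm]].
  pose proof (a_pos O) as Ha0.
  assert (Hpk : (p < k)%nat).
  { destruct (Nat.lt_ge_cases p k) as [|Hkp]; [assumption|].
    specialize (prefix_le_B k Hkp); lia. }
  destruct (a_onto (2 * a k - a p)) as [kw Hkw]; [lia|].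
  assert (Hkw_k : (kw < k)%nat).
  { apply (reflection_occurs_before p k kw Hpk); [exists (q - 1)|]; lia. }
  (* [a kw = 2 a k - a 0 - 1] cannot equal [a 0] by parity. *)
  assert (Hkw_pos : (0 < kw)%nat).
  { destruct kw; lia. }
  destruct (a_onto (2 * a kw - a O)) as [ke Hke]; [lia|].
  assert (Hke_kw : (ke < kw)%nat).
  { apply (reflection_occurs_before O kw ke Hkw_pos); [exists (2 * q - 1)|]; lia. }
  exists ke; split; [lia|].
  repeat split; [exists (4 * q - 1)| |]; lia.
Qed.

Lemma far_value_absent (k : nat) : ~ far_value (a k).
Proof.
  induction k as [k IH] using lt_wf_ind; intros Hfar.
  destruct (far_value_descent k Hfar) as [k' [Hk' Hfar']].
  exact (IH k' Hk' Hfar').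
Qed.

End Descent.

Lemma no_odd_3AP_absurd : False.
Proof.
  pose proof (a_pos O) as Hm.
  destruct (a_onto (a O + 1)) as [p Hp]; [lia|].
  destruct (prefix_bounded a p) as [B HB].
  destruct (a_onto (5 * a O + 2 * Z.abs B + 4)) as [k Hk]; [lia|].
  apply (far_value_absent p B Hp HB k).
  rewrite Hk; repeat split; [exists (2 * a O + Z.abs B + 2)| |]; lia.
Qed.

End NoOdd3AP.

Theorem theorem2 : forall a : nat -> Z, is_perm_pos a ->
  exists d : Z, Z.Odd d /\ has_3AP_diff a d.
Proof.
  intros a [Hpos Hperm].
  apply NNPP; intro Hnone.
  apply (no_odd_3AP_absurd a Hpos).
  - intros n Hn; destruct (Hperm n Hn) as [i [Hi _]]; eauto.
  - intros d Hd HAP; eauto.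
Qed.
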